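(* For the sequence $\{\bm g^t=(\bm\beta^t,\bm z^t,\bm u^t)\}$ generated by the parallel PPA or the improved parallel PPA, $$\|\bm g^t-\bm g^{t+1}\|_{\bm H_*}^2\le\|\bm g^{t-1}-\bm g^t\|_{\bm H_*}^2,$$ where $\bm H_*=\bm H$ for the parallel PPA and $\bm H_*=\bm H_K$ for the improved parallel PPA.
   Context: Dantzig selector in split form: with $\bm X=(\bm X_1,\dots,\bm X_K)\in\mathbb R^{n\times p}$, $\bm y\in\mathbb R^n$, $\bm A=\bm X^\top\bm X=(\bm A_1,\dots,\bm A_K)$, $\bm A_i=\bm X^\top\bm X_i\in\mathbb R^{p\times p_i}$, $\bm\beta=(\bm\beta_{1\cdot}^\top,\dots,\bm\beta_{K\cdot}^\top)^\top$, solve $\min_{\bm\beta,\bm z}\sum_i\|\bm\beta_{i\cdot}\|_1+\delta(\bm z)$ s.t. $\sum_i\bm A_i\bm\beta_{i\cdot}-\bm z=\bm X^\top\bm y$, where $\delta$ is the indicator of $\{\bm z:\|\bm z\|_\infty\le n\lambda\}$. Parallel PPA with $\mu>0$ and $\eta$ larger than the largest eigenvalue of $\mu\bm A^\top\bm A$: $\bm\beta_{i\cdot}^{t+1}=\mathrm{sign}(\bm v_i)\odot\max\{|\bm v_i|-1/\eta,0\}$ with $\bm v_i=\bm\beta_{i\cdot}^t+\bm A_i^\top\bm u^t/\eta$; $\bm z^{t+1}=\min\{\max\{\bm z^t-\bm u^t/\mu,-n\lambda\},n\lambda\}$; $\bm u^{t+1}=\bm u^t-\frac{\mu}{2}[2(\bm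 A\bm\beta^{t+1}-\bm z^{t+1}-\bm X^\top\bm y)-(\bm A\bm\beta^t-\bm z^t-\bm X^\top\bm y)]$. Improved parallel PPA: same but $\eta$ replaced by $\eta_i$ (larger than the largest eigenvalue of $\mu\bm A_i^\top\bm A_i$) in block $i$, and $\frac{\mu}{2}$ replaced by $\frac{\mu}{K+1}$ in the $\bm u$ update. $\|\bm v\|_{\bm H}=\sqrt{\bm v^\top\bm H\bm v}$, with $\bm H=\begin{pmatrix}\eta\bm I_p&\bm 0&\bm A^\top\\\bm 0&\mu\bm I_p&-\bm I_p\\\bm A&-\bm I_p&\frac{2}{\mu}\bm I_p\end{pmatrix}$ and $\bm H_K=\begin{pmatrix}\mathrm{diag}(\eta_1\bm I_{p_1},\dots,\eta_K\bm I_{p_K},\mu\bm I_p)&\bm G^\top\\\bm G&\frac{K+1}{\mu}\bm I_p\end{pmatrix}$, $\bm G=(\bm A_1,\dots,\bm A_K,-\bm I_p)$; both positive definite. *)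

From HB Require Import structures.
From mathcomp Require Import all_boot all_order all_algebra.
From mathcomp Require Import reals.
Set Implicit Arguments. Unset Strict Implicit. Unset Printing Implicit Defensive.
Import Order.TTheory GRing.Theory Num.Theory.
Local Open Scope ring_scope.

Section PPA.
Variable R : realType.

Definition sqnormH (m : nat) (H : 'M[R]_m) (v : 'cV[R]_m) : R :=
  (v^T *m H *m v) 0 0.

Definition soft (m : nat) (c : R) (v : 'cV[R]_m) : 'cV[R]_m :=
  map_mx (fun x => Num.sg x * Num.max (`|x| - c) 0) v.

Definition clip (m : nat) (a : R) (w : 'cV[R]_m) : 'cV[R]_m :=
  map_mx (fun x => Num.min (Num.max x (- a)) a) w.

Variables (n K : nat) (pk : 'I_K -> nat).
Notation p := (\sum_(i < K) pk i)%N.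

Definition Amat (X : 'M[R]_(n, p)) : 'M[R]_p := X^T *m X.
Definition Ablk (X : 'M[R]_(n, p)) (i : 'I_K) : 'M[R]_(p, pk i) :=
  X^T *m submxrow X i.

Definition beta_step (X : 'M[R]_(n, p)) (etas : 'I_K -> R)
    (beta u : 'cV[R]_p) : 'cV[R]_p :=
  \mxcol_(i < K) soft (etas i)^-1
     (submxcol beta i + (etas i)^-1 *: ((Ablk X i)^T *m u)).

Definition z_step (lam mu : R) (z u : 'cV[R]_p) : 'cV[R]_p :=
  clip (n%:R * lam) (z - mu^-1 *: u).

Definition u_step (X : 'M[R]_(n, p)) (y : 'cV[R]_n) (c : R)
    (beta z u beta' z' : 'cV[R]_p) : 'cV[R]_p :=
  u - c *: (2%:R *: (Amat X *m beta' - z' - X^T *m y)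
            - (Amat X *m beta - z - X^T *m y)).

(* a sequence generated by the (block) PPA with step sizes etas and
   multiplier constant c (c = mu/2 for the parallel PPA, c = mu/(K+1)
   for the improved parallel PPA) *)
Definition ppa_seq (X : 'M[R]_(n, p)) (y : 'cV[R]_n) (lam mu : R)
    (etas : 'I_K -> R) (c : R) (beta z u : nat -> 'cV[R]_p) : Prop :=
  forall t,
    [/\ beta t.+1 = beta_step X etas (beta t) (u t),
        z t.+1 = z_step lam mu (z t) (u t)
      & u t.+1 = u_step X y c (beta t) (z t) (u t) (beta t.+1) (z t.+1)].

Definition gvec (b z u : 'cV[R]_p) : 'cV[R]_(p + p + p) := col_mx (col_mx b z) u.

Definition Hmat (X : 'M[R]_(n, p)) (eta mu : R) : 'M[R]_(p + p + p) :=
  block_mx (block_mx (eta%:M) 0 0 (mu%:M))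
           (col_mx (Amat X)^T (- 1%:M))
           (row_mx (Amat X) (- 1%:M))
           ((2%:R / mu)%:M).

Definition Gmat (X : 'M[R]_(n, p)) : 'M[R]_(p, p + p) :=
  row_mx (\mxrow_(i < K) Ablk X i) (- 1%:M).

Definition HKmat (X : 'M[R]_(n, p)) (etas : 'I_K -> R) (mu : R)
    : 'M[R]_(p + p + p) :=
  block_mx (block_mx (\mxdiag_(i < K) ((etas i)%:M : 'M[R]_(pk i))) 0 0 (mu%:M))
           (Gmat X)^T
           (Gmat X)
           ((K.+1%:R / mu)%:M).

End PPA.

From HB Require Import structures.
From mathcomp Require Import all_boot all_order all_algebra.
From mathcomp Require Import reals.
From mathcomp Require Import sesquilinear spectral complex.
From mathcomp Require Import ring lra.
Import Order.TTheory GRing.Theory Num.Theory.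
Set Implicit Arguments. Unset Strict Implicit. Unset Printing Implicit Defensive.
Local Open Scope ring_scope.

(* Both algorithms are proximal point iterations in the metric H_*: the
   beta-update is soft thresholding (the prox of the l1 norm), the z-update is
   clipping (the projection onto the l_inf ball) and the u-update is affine.
   Firm nonexpansiveness of these two maps, added to the relation between two
   consecutive u-updates, gives <b, H_* d> >= 0 for b = g^{t+1} - g^{t+2} and
   d = (g^t - g^{t+1}) - b.  The step-size conditions make H_* positive
   semidefinite: completing the square in the u-row reduces this to
   mu |A_i x|^2 <= eta_i |x|^2, which holds since the symmetric matrix
   mu A_i^T A_i has all its eigenvalues below eta_i (spectral theorem over C).
   Hence |b + d|_{H_*}^2 = |b|^2 + 2 <b, H_* d> + |d|^2 >= |b|^2. *)

Section DotProduct.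
Variable R : realFieldType.

Definition dotv m (x y : 'cV[R]_m) : R := (x^T *m y) 0 0.

Lemma dotvE m (x y : 'cV[R]_m) : dotv x y = \sum_i x i 0 * y i 0.
Proof. by rewrite /dotv mxE; apply: eq_bigr => i _; rewrite mxE. Qed.

Lemma dotvC m (x y : 'cV[R]_m) : dotv x y = dotv y x.
Proof. by rewrite !dotvE; apply: eq_bigr => i _; rewrite mulrC. Qed.

Lemma dotvDr m (x y z : 'cV[R]_m) : dotv x (y + z) = dotv x y + dotv x z.
Proof. by rewrite /dotv mulmxDr mxE. Qed.

Lemma dotvNr m (x y : 'cV[R]_m) : dotv x (- y) = - dotv x y.
Proof. by rewrite /dotv mulmxN mxE. Qed.

Lemma dotvBr m (x y z : 'cV[R]_m) : dotv x (y - z) = dotv x y - dotv x z.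
Proof. by rewrite dotvDr dotvNr. Qed.

Lemma dotvZr m a (x y : 'cV[R]_m) : dotv x (a *: y) = a * dotv x y.
Proof. by rewrite /dotv -scalemxAr mxE. Qed.

Lemma dotvDl m (x y z : 'cV[R]_m) : dotv (y + z) x = dotv y x + dotv z x.
Proof. by rewrite dotvC dotvDr dotvC (dotvC x). Qed.

Lemma dotvNl m (x y : 'cV[R]_m) : dotv (- y) x = - dotv y x.
Proof. by rewrite dotvC dotvNr dotvC. Qed.

Lemma dotvZl m a (x y : 'cV[R]_m) : dotv (a *: y) x = a * dotv y x.
Proof. by rewrite dotvC dotvZr dotvC. Qed.

Lemma dotv_mulmx m k (M : 'M[R]_(m, k)) (x : 'cV[R]_m) (y : 'cV[R]_k) :
  dotv x (M *m y) = dotv y (M^T *m x).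
Proof. by rewrite dotvC /dotv trmx_mul mulmxA. Qed.

Lemma dotv_ge0 m (x : 'cV[R]_m) : 0 <= dotv x x.
Proof. by rewrite dotvE; apply: sumr_ge0 => i _; rewrite -expr2 sqr_ge0. Qed.

Lemma dotv_gt0 m (x : 'cV[R]_m) : x != 0 -> 0 < dotv x x.
Proof.
move=> x_neq0; rewrite lt_def dotv_ge0 andbT; apply: contra x_neq0 => /eqP x0.
apply/eqP/matrixP => i j; rewrite ord1 mxE.
have /eqP : x i 0 * x i 0 = 0.
  by move: x0; rewrite dotvE => /psumr_eq0P-> // k _; rewrite -expr2 sqr_ge0.
by rewrite mulf_eq0 orbb => /eqP.
Qed.

Lemma dotv_sumr m (I : finType) (x : 'cV[R]_m) (F : I -> 'cV[R]_m) :
  dotv x (\sum_i F i) = \sum_i dotv x (F i).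
Proof.
apply: (big_ind2 (fun a b => dotv x a = b)) => [|a1 a2 b1 b2 <- <-|//].
  by rewrite /dotv mulmx0 mxE.
by rewrite dotvDr.
Qed.

Lemma dotv_col_mx m1 m2 (x1 y1 : 'cV[R]_m1) (x2 y2 : 'cV[R]_m2) :
  dotv (col_mx x1 x2) (col_mx y1 y2) = dotv x1 y1 + dotv x2 y2.
Proof. by rewrite /dotv tr_col_mx mul_row_col mxE. Qed.

Lemma dotv_mxcol k (q : 'I_k -> nat) (x y : forall i, 'cV[R]_(q i)) :
  dotv (\mxcol_i x i) (\mxcol_i y i) = \sum_i dotv (x i) (y i).
Proof. by rewrite /dotv tr_mxcol mul_mxrow_mxcol summxE. Qed.

Lemma dotv_dim0 m (x y : 'cV[R]_m) : m = 0%N -> dotv x y = 0.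
Proof. by move=> m0; subst m; rewrite dotvE big_ord0. Qed.

Lemma dotv_completed_square m mu (a b : 'cV[R]_m) : mu != 0 ->
  mu^-1 * dotv (mu *: a + b) (mu *: a + b)
  = mu * dotv a a + 2 * dotv a b + mu^-1 * dotv b b.
Proof.
move=> mu_neq0; rewrite !(dotvDl, dotvDr, dotvZl, dotvZr) (dotvC b a).
by field.
Qed.

Lemma completed_square_ge0 m' m (B : 'M[R]_(m', m)) mu eta x (u : 'cV[R]_m') :
  0 < mu -> mu * dotv (B *m x) (B *m x) <= eta * dotv x x ->
  0 <= eta * dotv x x + 2 * dotv u (B *m x) + mu^-1 * dotv u u.
Proof.
move=> mu_gt0 B_le.
have : 0 <= mu^-1 * dotv (mu *: (B *m x) + u) (mu *: (B *m x) + u).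
  by rewrite mulr_ge0 ?dotv_ge0 ?invr_ge0 ?ltW.
by rewrite dotv_completed_square ?gt_eqF // (dotvC _ u); lra.
Qed.

End DotProduct.

Section SymmetricSpectral.
Local Open Scope sesquilinear_scope.
Variable R : rcfType.
Local Notation C := (complex R).
Local Notation toC := (real_complex R).

Lemma map_real_complex_hermsym m (S : 'M[R]_m) :
  S^T = S -> map_mx toC S \is hermsymmx.
Proof.
move=> S_sym; apply/is_hermitianmxP; rewrite expr0 scale1r.
by apply/matrixP => i j; rewrite !mxE -[in LHS]S_sym mxE; exact/esym/conjc_real.
Qed.

Lemma eigenvalue_real_complex m (S : 'M[R]_m) r :
  eigenvalue (map_mx toC S) (toC r) -> eigenvalue S r.
Proof.
by rewrite !eigenvalue_root_char -map_char_poly /root horner_map fmorph_eq0.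
Qed.

Lemma symmetric_spectral m (S : 'M[R]_m) : S^T = S ->
  exists (P : 'M[C]_m) (d : 'rV[R]_m),
   [/\ P^t* *m P = 1%:M,
       map_mx toC S = P^t* *m diag_mx (map_mx toC d) *m P
     & forall k, eigenvalue S (d 0 k)].
Proof.
move=> S_sym; set A := map_mx toC S.
have A_herm : A \is hermsymmx by exact: map_real_complex_hermsym.
have /orthomx_spectralP A_spec := hermitian_normalmx A_herm.
have d_real := hermitian_spectral_diag_real A_herm.
set P := spectralmx A in A_spec; set dC := spectral_diag A in A_spec d_real.
have P_unitary : P \is unitarymx by exact: spectral_unitarymx.
have PPt : P *m P^t* = 1%:M by apply/unitarymxP.
have PtP : P^t* *m P = 1%:M by rewrite -[P^t*]mul1mx mulmxKtV.
have dCE : dC = map_mx toC (map_mx (@complex.Re R) dC).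
  by apply/matrixP => i j; rewrite !mxE RRe_real //; move/mxOverP: d_real; apply.
exists P, (map_mx (@complex.Re R) dC); split => //.
  by rewrite -dCE -invmx_unitary.
move=> k; apply: eigenvalue_real_complex.
rewrite (_ : toC _ = (map_mx toC (map_mx (@complex.Re R) dC)) 0 k);
  last by rewrite [RHS]mxE.
rewrite -dCE.
apply/eigenvalueP; exists (row k P).
  rewrite -row_mul [in P *m A]A_spec !mulmxA mulmxV ?spectral_unit // mul1mx.
  by rewrite row_mul row_diag_mx -scalemxAl -rowE.
apply/eqP => Pk0.
have /rowP/(_ k) : row k P *m P^t* = row k (1%:M : 'M[C]_m) by rewrite -row_mul PPt.
by rewrite Pk0 mul0mx !mxE eqxx => /eqP; rewrite eq_sym oner_eq0.
Qed.

(* With [y] the coordinates of [x] in a unitary eigenbasis,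
   [eta |x|^2 - x^T S x = \sum_k (eta - d_k) |y_k|^2]. *)
Lemma symmetric_dotv_le m (S : 'M[R]_m) (eta : R) : S^T = S ->
  (forall a, eigenvalue S a -> a < eta) ->
  forall x : 'cV[R]_m, dotv x (S *m x) <= eta * dotv x x.
Proof.
move=> S_sym eig_lt x; rewrite /dotv mulmxA.
have [P [d [PtP SE eig_d]]] := symmetric_spectral S_sym.
have toC00 (M : 'M[R]_1) : toC (M 0 0) = (map_mx toC M) 0 0 by rewrite [RHS]mxE.
rewrite -lecR rmorphM /= !toC00 !map_mxM -map_trmx.
set w := (map_mx toC x)^T.
have wtE : w^t* = map_mx toC x.
  by apply/matrixP => i j; rewrite !mxE; exact: conjc_real.
set y := w *m P^t*.
have ytE : y^t* = P *m w^t* by rewrite /y trmx_mul map_mxM trmxCK.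
have -> : w *m map_mx toC S *m map_mx toC x = y *m diag_mx (map_mx toC d) *m y^t*.
  by rewrite ytE wtE SE /y !mulmxA.
have -> : w *m map_mx toC x = y *m y^t*.
  by rewrite ytE wtE /y mulmxA -[w *m _ *m _]mulmxA PtP mulmx1.
clearbody y; rewrite -subr_ge0 !mxE mulr_sumr -sumrB; apply: sumr_ge0 => k _.
rewrite mul_mx_diag !mxE.
have -> : toC eta * (y 0 k * (y 0 k)^*) - y 0 k * toC (d 0 k) * (y 0 k)^* =
   (toC eta - toC (d 0 k)) * (y 0 k * (y 0 k)^*) by ring.
apply: mulr_ge0; last exact: mulcJ_ge0.
by rewrite -rmorphB ler0c subr_ge0 ltW // eig_lt.
Qed.

Lemma symmetric_eigenvalue_exists m (S : 'M[R]_m) : S^T = S -> (0 < m)%N ->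
  exists a, eigenvalue S a.
Proof.
move=> S_sym m_gt0; have [_ [d [_ _ eig_d]]] := symmetric_spectral S_sym.
by exists (d 0 (Ordinal m_gt0)).
Qed.

End SymmetricSpectral.

Section GramEigenvalueBound.
Variables (R : rcfType) (m' m : nat) (B : 'M[R]_(m', m)) (mu eta : R).
Hypothesis eig_lt : forall a, eigenvalue (mu *: (B^T *m B)) a -> a < eta.

Let gram_sym : (mu *: (B^T *m B))^T = mu *: (B^T *m B).
Proof. by rewrite linearZ /= trmx_mul trmxK. Qed.

Let dotv_gram x : dotv x (mu *: (B^T *m B) *m x) = mu * dotv (B *m x) (B *m x).
Proof. by rewrite -scalemxAl dotvZr -mulmxA dotv_mulmx trmxK. Qed.

Lemma gram_dotv_le x : mu * dotv (B *m x) (B *m x) <= eta * dotv x x.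
Proof. by rewrite -dotv_gram; apply: symmetric_dotv_le gram_sym eig_lt x. Qed.

Lemma gram_eig_bound_gt0 : 0 <= mu -> (0 < m)%N -> 0 < eta.
Proof.
move=> mu_ge0 m_gt0; have [a eig_a] := symmetric_eigenvalue_exists gram_sym m_gt0.
apply: le_lt_trans (eig_lt eig_a).
case/eigenvalueP: eig_a => v vS v_neq0.
have vT_neq0 : v^T != 0 by rewrite trmx_eq0.
have : dotv v^T (mu *: (B^T *m B) *m v^T) = a * dotv v^T v^T.
  by rewrite /dotv trmxK mulmxA vS -scalemxAl mxE.
rewrite dotv_gram => aE.
rewrite -(pmulr_lge0 _ (dotv_gt0 vT_neq0)) -aE.
by rewrite mulr_ge0 ?dotv_ge0.
Qed.

End GramEigenvalueBound.

Section Thresholds.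
Variable R : realFieldType.

Definition soft_scalar (c x : R) := Num.sg x * Num.max (`|x| - c) 0.
Definition clip_scalar (a x : R) := Num.min (Num.max x (- a)) a.

Lemma soft_scalar_cases c x : 0 <= c ->
  [\/ c < x /\ soft_scalar c x = x - c, x < - c /\ soft_scalar c x = x + c
    | - c <= x <= c /\ soft_scalar c x = 0].
Proof.
move=> c_ge0; rewrite /soft_scalar.
have [cx|xc] := ltP c x.
  apply: Or31; split => //; have x_gt0 : 0 < x by lra.
  by rewrite gtr0_sg // ger0_norm ?ltW // mul1r; apply/max_idPl; lra.
have [xNc|Ncx] := ltP x (- c).
  apply: Or32; split => //; have x_lt0 : x < 0 by lra.
  rewrite ltr0_sg // ltr0_norm // mulN1r (_ : Num.max _ _ = - x - c); first lra.
  by apply/max_idPl; lra.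
apply: Or33; split; first by apply/andP.
rewrite (_ : Num.max _ _ = 0) ?mulr0 //; apply/max_idPr.
by rewrite subr_le0 ler_norml Ncx.
Qed.

Lemma clip_scalar_cases a x : 0 <= a ->
  [\/ a < x /\ clip_scalar a x = a, x < - a /\ clip_scalar a x = - a
    | - a <= x <= a /\ clip_scalar a x = x].
Proof.
move=> a_ge0; rewrite /clip_scalar.
have [ax|xa] := ltP a x.
  by apply: Or31; split => //; apply/min_idPr; rewrite le_max; apply/orP; left; lra.
have [xNa|Nax] := ltP x (- a).
  by apply: Or32; split => //; apply/min_idPl; lra.
by apply: Or33; split => //; apply/min_idPl.
Qed.

(* Soft thresholding and clipping are proximal maps (of c|.| and of the
   indicator of [-a, a]), hence firmly nonexpansive. *)
Lemma soft_scalar_firm c x y : 0 <= c ->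
  0 <= (soft_scalar c x - soft_scalar c y)
       * ((x - soft_scalar c x) - (y - soft_scalar c y)).
Proof.
move=> c_ge0.
by case: (soft_scalar_cases x c_ge0) => [[? ->]|[? ->]|[/andP[? ?] ->]];
   case: (soft_scalar_cases y c_ge0) => [[? ->]|[? ->]|[/andP[? ?] ->]]; nra.
Qed.

Lemma clip_scalar_firm a x y : 0 <= a ->
  0 <= (clip_scalar a x - clip_scalar a y)
       * ((x - clip_scalar a x) - (y - clip_scalar a y)).
Proof.
move=> a_ge0.
by case: (clip_scalar_cases x a_ge0) => [[? ->]|[? ->]|[/andP[? ?] ->]];
   case: (clip_scalar_cases y a_ge0) => [[? ->]|[? ->]|[/andP[? ?] ->]]; nra.
Qed.

End Thresholds.

Section FirmNonexpansive.
Variables (R : realType) (m : nat).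

Lemma soft_firm c (v v' : 'cV[R]_m) : 0 <= c ->
  0 <= dotv (soft c v - soft c v') ((v - soft c v) - (v' - soft c v')).
Proof.
move=> c_ge0; rewrite dotvE; apply: sumr_ge0 => i _; rewrite !mxE.
exact: soft_scalar_firm.
Qed.

Lemma clip_firm a (v v' : 'cV[R]_m) : 0 <= a ->
  0 <= dotv (clip a v - clip a v') ((v - clip a v) - (v' - clip a v')).
Proof.
move=> a_ge0; rewrite dotvE; apply: sumr_ge0 => i _; rewrite !mxE.
exact: clip_scalar_firm.
Qed.

Lemma firm_prox_step (P : 'cV[R]_m -> 'cV[R]_m) eta (s0 s1 s2 g0 g1 : 'cV[R]_m) :
  0 < eta -> (forall v v', 0 <= dotv (P v - P v') ((v - P v) - (v' - P v'))) ->
  s1 = P (s0 + eta^-1 *: g0) -> s2 = P (s1 + eta^-1 *: g1) ->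
  0 <= dotv (s1 - s2) (eta *: ((s0 - s1) - (s1 - s2)) + (g0 - g1)).
Proof.
move=> eta_gt0 P_firm s1E s2E.
have := P_firm (s0 + eta^-1 *: g0) (s1 + eta^-1 *: g1); rewrite -s1E -s2E.
have -> : eta *: ((s0 - s1) - (s1 - s2)) + (g0 - g1) =
          eta *: ((s0 + eta^-1 *: g0 - s1) - (s1 + eta^-1 *: g1 - s2)).
  by apply/matrixP => i j; rewrite !mxE; field; rewrite gt_eqF.
by rewrite dotvZr; apply: mulr_ge0; exact: ltW.
Qed.

End FirmNonexpansive.

Section PPAMetric.
Variables (R : realType) (p : nat).
Implicit Types (D A : 'M[R]_p) (mu kap : R).

Lemma sqnormH_dotv m (H : 'M[R]_m) v : sqnormH H v = dotv v (H *m v).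
Proof. by rewrite /sqnormH /dotv mulmxA. Qed.

Lemma sqnormH_addr m (H : 'M[R]_m) b d : H^T = H ->
  sqnormH H (b + d) = sqnormH H b + 2 * dotv b (H *m d) + sqnormH H d.
Proof.
move=> H_sym; rewrite !sqnormH_dotv mulmxDr !(dotvDl, dotvDr).
by rewrite [dotv d (H *m b)]dotv_mulmx H_sym dotvC; ring.
Qed.

Lemma sqnormH_le_addr m (H : 'M[R]_m) b d : H^T = H ->
  0 <= sqnormH H d -> 0 <= dotv b (H *m d) -> sqnormH H b <= sqnormH H (b + d).
Proof. by move=> H_sym d_ge0 bd_ge0; rewrite sqnormH_addr //; lra. Qed.

(* The common shape of H and H_K: [D, 0, A^T; 0, mu I, -I; A, -I, kap I]. *)
Definition ppa_metric D A mu kap : 'M[R]_(p + p + p) :=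
  block_mx (block_mx D 0 0 mu%:M) (col_mx A^T (- 1%:M))
           (row_mx A (- 1%:M)) kap%:M.

Lemma trmx_ppa_metric D A mu kap : D^T = D ->
  (ppa_metric D A mu kap)^T = ppa_metric D A mu kap.
Proof.
move=> D_sym; rewrite /ppa_metric !tr_block_mx tr_col_mx tr_row_mx trmxK D_sym.
by rewrite !trmx0 !tr_scalar_mx linearN /= trmx1.
Qed.

Lemma ppa_metric_mul D A mu kap (w1 w2 w3 : 'cV[R]_p) :
  ppa_metric D A mu kap *m col_mx (col_mx w1 w2) w3
  = col_mx (col_mx (D *m w1 + A^T *m w3) (mu *: w2 - w3))
           (A *m w1 - w2 + kap *: w3).
Proof.
rewrite /ppa_metric !mul_block_col !mul_row_col !mul_col_mx.
by rewrite !mul0mx !add0r !addr0 add_col_mx !mul_scalar_mx !mulNmx !mul1mx.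
Qed.

Lemma ppa_metric_dotv D A mu kap (v1 v2 v3 w1 w2 w3 : 'cV[R]_p) :
  dotv (col_mx (col_mx v1 v2) v3) (ppa_metric D A mu kap *m col_mx (col_mx w1 w2) w3)
  = dotv v1 (D *m w1 + A^T *m w3) + dotv v2 (mu *: w2 - w3)
    + dotv v3 (A *m w1 - w2 + kap *: w3).
Proof. by rewrite ppa_metric_mul !dotv_col_mx. Qed.

(* The completed square [mu^-1 |mu v2 - v3|^2] absorbs the middle row. *)
Lemma ppa_metric_psd D A mu kap : 0 < mu ->
  (forall x u : 'cV[R]_p,
     0 <= dotv x (D *m x) + 2 * dotv u (A *m x) + (kap - mu^-1) * dotv u u) ->
  forall v, 0 <= sqnormH (ppa_metric D A mu kap) v.
Proof.
move=> mu_gt0 DA_psd v; rewrite -[v]vsubmxK -[usubmx v]vsubmxK sqnormH_dotv.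
set v1 := usubmx _; set v2 := dsubmx (usubmx v); set v3 := dsubmx v.
have sq_ge0 : 0 <= mu^-1 * dotv (mu *: v2 + - v3) (mu *: v2 + - v3).
  by rewrite mulr_ge0 ?dotv_ge0 ?invr_ge0 ?ltW.
move: sq_ge0 (DA_psd v1 v3).
rewrite dotv_completed_square ?gt_eqF // ppa_metric_dotv.
rewrite !(dotvDr, dotvBr, dotvZr, dotvNr, dotvNl) [dotv v1 (_^T *m _)]dotv_mulmx trmxK.
by rewrite (dotvC v3 v2) mulrBl; lra.
Qed.

(* [e] is the previous difference of iterates and [b] the current one: the
   u-row relation makes the H-inner product equal to the sum of the two
   variational inequalities. *)
Lemma ppa_metric_cross_ge0 D A mu kap (b1 b2 b3 e1 e2 e3 : 'cV[R]_p) :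
  0 <= dotv b1 (D *m (e1 - b1) + A^T *m e3) ->
  0 <= dotv b2 (mu *: (e2 - b2) - e3) ->
  kap *: (e3 - b3) = (A *m b1 - b2) - (A *m (e1 - b1) - (e2 - b2)) ->
  0 <= dotv (col_mx (col_mx b1 b2) b3)
            (ppa_metric D A mu kap *m col_mx (col_mx (e1 - b1) (e2 - b2)) (e3 - b3)).
Proof.
move=> beta_ge0 z_ge0 u_eq; rewrite ppa_metric_dotv -addrA u_eq.
move: beta_ge0 z_ge0.
rewrite !(mulmxDr, mulmxN, dotvDr, dotvBr, dotvZr, dotvNr).
by rewrite [dotv b1 (A^T *m b3)]dotv_mulmx trmxK (dotvC b3 b2); lra.
Qed.

End PPAMetric.

Section ParallelPPA.
Variables (R : realType) (n K : nat) (pk : 'I_K -> nat).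
Local Notation p := (\sum_(i < K) pk i)%N.
Variables (X : 'M[R]_(n, p)) (y : 'cV[R]_n) (lam mu : R).

Lemma mxrow_Ablk : \mxrow_i Ablk X i = Amat X.
Proof. by rewrite /Ablk -mul_mxrow submxrowK. Qed.

Lemma submxcol_trAmat_mul (u : 'cV[R]_p) i :
  submxcol ((Amat X)^T *m u) i = (Ablk X i)^T *m u.
Proof. by rewrite -mxrow_Ablk tr_mxrow mxcol_mul mxcolK. Qed.

Definition step_diag (etas : 'I_K -> R) : 'M[R]_p :=
  \mxdiag_i ((etas i)%:M : 'M[R]_(pk i)).

Lemma trmx_step_diag etas : (step_diag etas)^T = step_diag etas.
Proof. by rewrite tr_mxdiag; apply: eq_mxdiag => i; rewrite tr_scalar_mx. Qed.

(* An empty block has no eigenvalue, so nothing bounds its step size; it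
   contributes nothing to the inner product. *)
Lemma beta_step_firm etas (b0 b1 b2 u0 u1 : 'cV[R]_p) :
  (forall i, (0 < pk i)%N -> 0 < etas i) ->
  b1 = beta_step X etas b0 u0 -> b2 = beta_step X etas b1 u1 ->
  0 <= dotv (b1 - b2)
            (step_diag etas *m ((b0 - b1) - (b1 - b2)) + (Amat X)^T *m (u0 - u1)).
Proof.
move=> etas_gt0 b1E b2E; set w := (b0 - b1) - (b1 - b2).
have -> : step_diag etas *m w + (Amat X)^T *m (u0 - u1) =
          \mxcol_i (etas i *: submxcol w i + (Ablk X i)^T *m (u0 - u1)).
  apply/mxcolP => i; rewrite mxcolK submxcolD submxcol_trAmat_mul.
  by rewrite -[w in LHS]submxcolK mul_mxdiag_mxcol mxcolK mul_scalar_mx.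
rewrite -[b1 - b2]submxcolK dotv_mxcol; apply: sumr_ge0 => i _.
have [pk0|pk_gt0] := posnP (pk i); first by rewrite dotv_dim0.
rewrite /w !submxcolB mulmxBr; apply: (firm_prox_step (P := soft (etas i)^-1) (etas_gt0 i pk_gt0)).
- by move=> v v'; apply: soft_firm; rewrite invr_ge0 ltW ?etas_gt0.
- by rewrite b1E mxcolK.
- by rewrite [in LHS]b2E mxcolK.
Qed.

Lemma z_step_firm (z0 z1 z2 u0 u1 : 'cV[R]_p) : 0 < mu -> 0 <= n%:R * lam ->
  z1 = z_step n lam mu z0 u0 -> z2 = z_step n lam mu z1 u1 ->
  0 <= dotv (z1 - z2) (mu *: ((z0 - z1) - (z1 - z2)) - (u0 - u1)).
Proof.
move=> mu_gt0 nlam_ge0 z1E z2E.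
have z1E' : z1 = clip (n%:R * lam) (z0 + mu^-1 *: - u0) by rewrite z1E /z_step scalerN.
have z2E' : z2 = clip (n%:R * lam) (z1 + mu^-1 *: - u1) by rewrite z2E /z_step scalerN.
rewrite [- (u0 - u1)]opprD.
exact: firm_prox_step mu_gt0 (fun v v' => clip_firm v v' nlam_ge0) z1E' z2E'.
Qed.

Lemma u_step_second_diff c kap (b0 b1 b2 z0 z1 z2 u0 u1 u2 : 'cV[R]_p) :
  kap * c = 1 ->
  u1 = u_step X y c b0 z0 u0 b1 z1 -> u2 = u_step X y c b1 z1 u1 b2 z2 ->
  kap *: ((u0 - u1) - (u1 - u2))
  = (Amat X *m (b1 - b2) - (z1 - z2))
    - (Amat X *m ((b0 - b1) - (b1 - b2)) - ((z0 - z1) - (z1 - z2))).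
Proof.
move=> kap_c u1E u2E.
have kap_neq0 : kap != 0.
  by apply/eqP => kap0; move: kap_c; rewrite kap0 mul0r => /eqP; rewrite eq_sym oner_eq0.
rewrite u2E u1E /u_step !mulmxBr.
have -> : c = kap^-1 by apply: (mulfI kap_neq0); rewrite kap_c mulfV.
move: (Amat X *m b0) (Amat X *m b1) (Amat X *m b2) (X^T *m y) => a0 a1 a2 xy.
by apply/matrixP => i j; rewrite !mxE; field.
Qed.

Lemma ppa_seq_sqnormH_le etas c kap beta z u t :
  0 < mu -> 0 <= n%:R * lam -> kap * c = 1 ->
  (forall i, (0 < pk i)%N -> 0 < etas i) ->
  (forall v, 0 <= sqnormH (ppa_metric (step_diag etas) (Amat X) mu kap) v) ->
  ppa_seq X y lam mu etas c beta z u ->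
  sqnormH (ppa_metric (step_diag etas) (Amat X) mu kap)
    (gvec (beta t.+1) (z t.+1) (u t.+1) - gvec (beta t.+2) (z t.+2) (u t.+2))
  <= sqnormH (ppa_metric (step_diag etas) (Amat X) mu kap)
    (gvec (beta t) (z t) (u t) - gvec (beta t.+1) (z t.+1) (u t.+1)).
Proof.
move=> mu_gt0 nlam_ge0 kap_c etas_gt0 H_psd ppa.
have [b1E z1E u1E] := ppa t; have [b2E z2E u2E] := ppa t.+1.
set b := _ - gvec (beta t.+2) _ _; set e := _ - gvec (beta t.+1) _ _.
rewrite -[e](subrK b) addrC.
apply: sqnormH_le_addr => //; first exact/trmx_ppa_metric/trmx_step_diag.
rewrite /e /b /gvec !(opp_col_mx, add_col_mx).
apply: ppa_metric_cross_ge0.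
- exact: beta_step_firm etas_gt0 b1E b2E.
- exact: z_step_firm mu_gt0 nlam_ge0 z1E z2E.
- exact: u_step_second_diff kap_c u1E u2E.
Qed.

Lemma step_diag_cst eta : step_diag (fun=> eta) = eta%:M.
Proof. exact: mxdiagZ. Qed.

Lemma Hmat_ppa_metric eta :
  Hmat X eta mu = ppa_metric (step_diag (fun=> eta)) (Amat X) mu (2%:R / mu).
Proof. by rewrite step_diag_cst. Qed.

Lemma HKmat_ppa_metric etas :
  HKmat X etas mu = ppa_metric (step_diag etas) (Amat X) mu (K.+1%:R / mu).
Proof. by rewrite /HKmat /Gmat tr_row_mx mxrow_Ablk linearN /= trmx1. Qed.

Lemma step_diag_metric_ge0 etas (x u : 'cV[R]_p) : 0 < mu ->
  (forall i (xi : 'cV[R]_(pk i)),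
     mu * dotv (Ablk X i *m xi) (Ablk X i *m xi) <= etas i * dotv xi xi) ->
  0 <= dotv x (step_diag etas *m x) + 2 * dotv u (Amat X *m x)
       + (K.+1%:R / mu - mu^-1) * dotv u u.
Proof.
move=> mu_gt0 Ablk_le.
have -> : K.+1%:R / mu - mu^-1 = K%:R * mu^-1.
  by rewrite -addn1 natrD; field; rewrite gt_eqF.
rewrite -[x]submxcolK /step_diag mul_mxdiag_mxcol dotv_mxcol -mxrow_Ablk.
rewrite mul_mxrow_mxcol dotv_sumr mulr_sumr -mulrA.
have -> : K%:R * (mu^-1 * dotv u u) = \sum_(i < K) mu^-1 * dotv u u.
  by rewrite sumr_const card_ord mulr_natl.
rewrite -!big_split /=; apply: sumr_ge0 => i _.
by rewrite mul_scalar_mx dotvZr completed_square_ge0.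
Qed.

End ParallelPPA.

Theorem proposition4 (R : realType) (n K : nat) (pk : 'I_K -> nat)
    (X : 'M[R]_(n, \sum_(i < K) pk i)) (y : 'cV[R]_n) (lam mu : R) :
  0 < lam -> 0 < mu ->
  (* parallel PPA, H_* = H *)
  (forall (eta : R),
     (forall a : R, eigenvalue (mu *: ((Amat X)^T *m Amat X)) a -> a < eta) ->
     forall beta z u : nat -> 'cV[R]_(\sum_(i < K) pk i),
       ppa_seq X y lam mu (fun _ => eta) (mu / 2%:R) beta z u ->
       forall t : nat,
         sqnormH (Hmat X eta mu)
           (gvec (beta t.+1) (z t.+1) (u t.+1) - gvec (beta t.+2) (z t.+2) (u t.+2))
         <= sqnormH (Hmat X eta mu)
           (gvec (beta t) (z t) (u t) - gvec (beta t.+1) (z t.+1) (u t.+1)))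
  /\
  (* improved parallel PPA, H_* = H_K *)
  (forall (etas : 'I_K -> R),
     (forall (i : 'I_K) (a : R),
        eigenvalue (mu *: ((Ablk X i)^T *m Ablk X i)) a -> a < etas i) ->
     forall beta z u : nat -> 'cV[R]_(\sum_(i < K) pk i),
       ppa_seq X y lam mu etas (mu / K.+1%:R) beta z u ->
       forall t : nat,
         sqnormH (HKmat X etas mu)
           (gvec (beta t.+1) (z t.+1) (u t.+1) - gvec (beta t.+2) (z t.+2) (u t.+2))
         <= sqnormH (HKmat X etas mu)
           (gvec (beta t) (z t) (u t) - gvec (beta t.+1) (z t.+1) (u t.+1))).
Proof.
move=> lam_gt0 mu_gt0.
have nlam_ge0 : 0 <= n%:R * lam by rewrite mulr_ge0 ?ler0n ?ltW.
have mu_neq0 : mu != 0 by rewrite gt_eqF.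
split=> [eta eig_lt | etas eig_lt] beta z u ppa t.
- rewrite Hmat_ppa_metric; apply: ppa_seq_sqnormH_le ppa => //.
  + by field.
  + move=> i pk_gt0; apply: gram_eig_bound_gt0 eig_lt (ltW mu_gt0) _.
    by rewrite (bigD1 i) //= addn_gt0 pk_gt0.
  + apply: ppa_metric_psd => // x v; rewrite step_diag_cst mul_scalar_mx dotvZr.
    rewrite (_ : 2%:R / mu - mu^-1 = mu^-1); last by field.
    exact: completed_square_ge0 mu_gt0 (gram_dotv_le eig_lt x).
- rewrite HKmat_ppa_metric; apply: ppa_seq_sqnormH_le ppa => //.
  + by field; rewrite mu_neq0 andbT nat1r pnatr_eq0.
  + by move=> i; apply: gram_eig_bound_gt0 (eig_lt i) (ltW mu_gt0).
  + apply: ppa_metric_psd => // x v; apply: step_diag_metric_ge0 => // i xi.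
    exact: gram_dotv_le (eig_lt i) xi.
Qed.
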